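(* Let $\mathfrak{A}$ be an atomic weakly associative relation algebra and let $\mathfrak{B}=\langle B,T_\kappa,E_{\kappa\lambda}\rangle_{\kappa,\lambda<3}$ be its suitable structure. Then $\mathfrak{Cm}\,\mathfrak{B}\in\mathsf{NA}_3$, i.e., $\mathfrak{Cm}\,\mathfrak{B}$ is a non-commutative 3-dimensional cylindric algebra.
   Context: WA: algebras $\langle A,+,\overline{\phantom{x}},;,\breve{\phantom{x}},1'\rangle$ with $x\cdot y=\overline{\overline{x}+\overline{y}}$, $0'=\overline{1'}$, $1=1'+0'$, $0=\overline{1}$, satisfying for all $x,y,z$: $x+y=y+x$; $x+(y+z)=(x+y)+z$; $\overline{\overline{x}+\overline{y}}+\overline{\overline{x}+y}=x$; $((x\cdot 1');1);1=(x\cdot1');1$; $(x+y);z=x;z+y;z$; $x;1'=x$; $\breve{\breve{x}}=x$; $\breve{(x+y)}=\breve{x}+\breve{y}$; $\breve{(x;y)}=\breve{y};\breve{x}$; $\breve{x};\overline{x;y}+\overline{y}=\overline{y}$. Suitable structure of $\mathfrak{A}$: $B=\{s\in{}^3\mathrm{At}(\mathfrak{A}): s_2;s_0\ge s_1\}$; $T_\kappa=\{\langle s,t\rangle\in B\times B:s_\kappa=t_\kappa\}$; $E_{\kappa\kappa}=B$; for distinct $\kappa,\lambda$ with third index $\mu$, $E_{\kappa\lambda}=\{s\in B:s_\mu\le1'\}$. Complex algebra $\mathfrak{Cm}\,\mathfrak{B}=\langle\mathcal{P}(B),\cup,\cap,B\setminus\cdot,\emptyset,B,T_\kappa^*,E_{\kappa\lambda}\rangle_{\kappa,\lambda<3}$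 with cylindrifications $c_\kappa=T_\kappa^*$, $T_\kappa^*(X)=\{y\in B:\exists x\in X\ \langle y,x\rangle\in T_\kappa\}$, and diagonals $d_{\kappa\lambda}=E_{\kappa\lambda}$. $\mathsf{NA}_3$ is the class of algebras $\langle C,+,\cdot,-,0,1,c_\kappa,d_{\kappa\lambda}\rangle_{\kappa,\lambda<3}$ such that: (C0) the Boolean reduct is a Boolean algebra; (C1) $c_\kappa0=0$; (C2) $x\le c_\kappa x$; (C3) $c_\kappa(x\cdot c_\kappa y)=c_\kappa x\cdot c_\kappa y$; (C4$^*$) $c_\kappa c_\lambda x\ge c_\lambda c_\kappa x\cdot d_{\lambda\mu}$ whenever $\mu\ne\kappa,\lambda$; (C5) $d_{\kappa\kappa}=1$; (C6) $d_{\kappa\mu}=c_\lambda(d_{\kappa\lambda}\cdot d_{\lambda\mu})$ whenever $\lambda\ne\kappa,\mu$; (C7) $c_\kappa(d_{\kappa\lambda}\cdot x)\cdot c_\kappa(d_{\kappa\lambda}\cdot -x)=0$ whenever $\kappa\ne\lambda$. *)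

Set Implicit Arguments.

Record RAsig := {
  ra_car :> Type;
  ra_plus : ra_car -> ra_car -> ra_car;
  ra_compl : ra_car -> ra_car;
  ra_comp : ra_car -> ra_car -> ra_car;
  ra_conv : ra_car -> ra_car;
  ra_id : ra_car
}.

Section WAdefs.
Variable A : RAsig.
Local Notation "x + y" := (ra_plus A x y).
Local Notation "- x" := (ra_compl A x).
Local Notation "x ; y" := (ra_comp A x y) (at level 40, left associativity).
Local Notation "x ^~" := (ra_conv A x) (at level 2).
Local Notation "1'" := (ra_id A).

Definition ra_meet (x y : A) : A := - (- x + - y).
Definition ra_diversity : A := - 1'.
Definition ra_top : A := 1' + ra_diversity.
Definition ra_bot : A := - ra_top.
Definition ra_le (x y : A) : Prop := x + y = y.

Definition is_WA : Prop :=
  (forall x y : A, x + y = y + x) /\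
  (forall x y z : A, x + (y + z) = (x + y) + z) /\
  (forall x y : A, - (- x + - y) + - (- x + y) = x) /\
  (forall x : A, ((ra_meet x 1') ; ra_top) ; ra_top = (ra_meet x 1') ; ra_top) /\
  (forall x y z : A, (x + y) ; z = x ; z + y ; z) /\
  (forall x : A, x ; 1' = x) /\
  (forall x : A, x^~^~ = x) /\
  (forall x y : A, (x + y)^~ = x^~ + y^~) /\
  (forall x y : A, (x ; y)^~ = y^~ ; x^~) /\
  (forall x y : A, x^~ ; (- (x ; y)) + - y = - y).

Definition is_atom (a : A) : Prop :=
  a <> ra_bot /\ forall x : A, ra_le x a -> x = ra_bot \/ x = a.

Definition is_atomic : Prop :=
  forall x : A, x <> ra_bot -> exists a, is_atom a /\ ra_le a x.
End WAdefs.

Inductive idx3 : Type := i0 | i1 | i2.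

Definition third (k l : idx3) : idx3 :=
  match k, l with
  | i0, i1 | i1, i0 => i2
  | i0, i2 | i2, i0 => i1
  | i1, i2 | i2, i1 => i0
  | i0, i0 => i0 | i1, i1 => i1 | i2, i2 => i2  (* unused *)
  end.

Section Suitable.
Variable A : RAsig.

Definition inB (s : idx3 -> A) : Prop :=
  (forall i, is_atom A (s i)) /\ ra_le A (s i1) (ra_comp A (s i2) (s i0)).

Definition Bpt : Type := { s : idx3 -> A | inB s }.

Definition Tk (k : idx3) (s t : Bpt) : Prop := proj1_sig s k = proj1_sig t k.

Definition Ekl (k l : idx3) (s : Bpt) : Prop :=
  if (match k, l with i0,i0 | i1,i1 | i2,i2 => true | _,_ => false end)
  then True
  else ra_le A (proj1_sig s (third k l)) (ra_id A).

Definition CmSet : Type := Bpt -> Prop.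
Definition cm_join (X Y : CmSet) : CmSet := fun s => X s \/ Y s.
Definition cm_meet (X Y : CmSet) : CmSet := fun s => X s /\ Y s.
Definition cm_compl (X : CmSet) : CmSet := fun s => ~ X s.
Definition cm_zero : CmSet := fun _ => False.
Definition cm_one : CmSet := fun _ => True.
Definition cm_cyl (k : idx3) (X : CmSet) : CmSet :=
  fun y => exists x, X x /\ Tk k y x.
Definition cm_diag (k l : idx3) : CmSet := Ekl k l.
End Suitable.

Definition is_boolean_algebra (C : Type) (plus mul : C -> C -> C)
    (minus : C -> C) (zero one : C) : Prop :=
  (forall x y, plus x y = plus y x) /\
  (forall x y, mul x y = mul y x) /\
  (forall x y z, plus x (plus y z) = plus (plus x y) z) /\
  (forall x y z, mul x (mul y z) = mul (mul x y) z) /\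
  (forall x y, plus x (mul x y) = x) /\
  (forall x y, mul x (plus x y) = x) /\
  (forall x y z, mul x (plus y z) = plus (mul x y) (mul x z)) /\
  (forall x y z, plus x (mul y z) = mul (plus x y) (plus x z)) /\
  (forall x, plus x (minus x) = one) /\
  (forall x, mul x (minus x) = zero).

Definition is_NA3 (C : Type) (plus mul : C -> C -> C) (minus : C -> C)
    (zero one : C) (c : idx3 -> C -> C) (d : idx3 -> idx3 -> C) : Prop :=
  let le x y := plus x y = y in
  is_boolean_algebra plus mul minus zero one /\
  (forall k, c k zero = zero) /\
  (forall k x, le x (c k x)) /\
  (forall k x y, c k (mul x (c k y)) = mul (c k x) (c k y)) /\
  (forall k l m x, m <> k -> m <> l ->
               le (mul (c l (c k x)) (d l m)) (c k (c l x))) /\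
  (forall k, d k k = one) /\
  (forall k l m, l <> k -> l <> m ->
               d k m = c l (mul (d k l) (d l m))) /\
  (forall k l x, k <> l ->
               mul (c k (mul (d k l) x)) (c k (mul (d k l) (minus x))) = zero).

From Stdlib Require Import Classical ClassicalEpsilon FunctionalExtensionality
  PropExtensionality ProofIrrelevance.

Set Implicit Arguments.
Unset Strict Implicit.

(* A point s of B is a triangle: s k is the atom on the edge joining the two
   vertices other than k, directed from the smaller vertex to the larger one.
   c_k keeps side k and moves the opposite vertex, and d_kl says that side
   (third k l) is an identity atom, i.e. that the vertices k and l coincide.
   In an atomic WA every atom a has a unique domain and range among the
   identity atoms; uniqueness is where weak associativity enters, through
   (e;1);1 = e;1.  The sides of a triangle agree on the identity atoms at
   their common vertices, so a triangle with a collapsed side is determined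
   by any other side, and every atom is a side of such a triangle.  These
   two facts give C4*, C6 and C7; the other axioms hold for any
   cylindrification by equivalence relations. *)

Section Huntington.
Context {T : Type} {join : T -> T -> T} {compl : T -> T}.
Local Notation "x + y" := (join x y).
Local Notation "- x" := (compl x).
Hypothesis join_comm : forall x y, x + y = y + x.
Hypothesis join_assoc : forall x y z, x + (y + z) = (x + y) + z.
Hypothesis huntington : forall x y, - (- x + - y) + - (- x + y) = x.

(* Huntington's derivation of the Boolean laws: each step is closed by
   congruence from the listed ground instances of the three axioms. *)
Lemma hunt_compl_shift x : x + - x = - x + - - x.
Proof.
  pose proof (join_comm x (- x)).
  pose proof (join_comm (- x) (- - x)).
  pose proof (huntington x (- - x)).
  pose proof (huntington (- x) (- x)).
  pose proof (huntington (- x) (- - x)).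
  pose proof (huntington (- - x) (- x)).
  pose proof (join_assoc (- (- - x + - - - x)) (- (- - x + - - x)) (- - x)).
  pose proof (join_assoc (- (- - x + - - - x)) (- (- - x + - - x)) x).
  pose proof (join_comm (- x) (- - - x)).
  pose proof (join_comm (- (- x + - - - x)) (- (- x + - - x))).
  pose proof (join_comm (- - x) (- - - x)).
  pose proof (join_comm (- (- - x + - - - x)) (- (- - x + - - x))).
  pose proof (join_assoc (- (- - x + - - x)) (- (- x + - - x)) (- (- x + - - - x))).
  pose proof (join_assoc (- (- - x + - - x)) (- (- - x + - - - x)) (- (- x + - - - x))).
  congruence.
Qed.

Lemma hunt_compl_invol x : - - x = x.
Proof.
  pose proof (join_comm (- - x) (- - - - x)).
  pose proof (join_comm (- - - - x) (- - - x)).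
  pose proof (join_comm (- (- - - - x + - - - x)) (- (- - - - x + - - x))).
  pose proof (huntington x (- - - x)).
  pose proof (huntington (- x) (- - - x)).
  pose proof (huntington (- - x) (- x)).
  pose proof (huntington (- - - x) (- - x)).
  pose proof (hunt_compl_shift (- - x)).
  congruence.
Qed.

Lemma hunt_excluded_middle x y : x + - x = y + - y.
Proof.
  pose proof (join_comm x (- x)).
  pose proof (huntington x y).
  pose proof (huntington y x).
  pose proof (huntington (- x) (- y)).
  pose proof (huntington (- y) (- x)).
  pose proof (hunt_compl_invol x).
  pose proof (hunt_compl_invol y).
  pose proof (join_assoc y (- (- - y + x)) (- (- - y + - x))).
  pose proof (join_assoc (- x) (- (- x + - y)) (- (- x + y))).
  pose proof (join_comm (- x) (- y)).
  pose proof (join_comm (- x) y).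
  pose proof (join_comm (- y) x).
  pose proof (join_comm x y).
  pose proof (join_comm (- (- - x + - y)) (- (- - x + y))).
  pose proof (join_comm (- (- x + - y)) (- x)).
  pose proof (join_assoc (- (- x + - y)) (- (- y + x)) (- (- - x + y))).
  congruence.
Qed.

Lemma hunt_bot_idem x : - (x + - x) + - (x + - x) = - (x + - x).
Proof.
  pose proof (join_assoc (- (- (x + - x + (x + - x)) + (x + - x))) (x + - x) (- (x + - x))).
  pose proof (join_assoc (x + - x + (x + - x)) (- (x + - x)) (- (x + - x + (x + - x)))).
  pose proof (huntington (- (x + - x)) (x + - x)).
  pose proof (huntington (- (x + - x)) (- (x + - x))).
  pose proof (huntington (x + - x + (x + - x)) (- (x + - x))).
  pose proof (hunt_compl_invol (x + - x)).
  pose proof (hunt_excluded_middle (x + - x) x).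
  pose proof (hunt_excluded_middle (x + - x + (x + - x)) x).
  congruence.
Qed.

Lemma hunt_join_bot x y : x + - (y + - y) = x.
Proof.
  rewrite (hunt_excluded_middle y x).
  pose proof (join_comm x (- x)).
  pose proof (join_comm x (- (x + - x))).
  pose proof (huntington x (- x)).
  pose proof (hunt_compl_invol x).
  pose proof (hunt_bot_idem x).
  pose proof (join_assoc (- (x + - x)) (- (x + - x)) (- (- x + - x))).
  congruence.
Qed.

Lemma hunt_join_idem x : x + x = x.
Proof.
  assert (Hc : forall z, - (- z + - z) = z).
  { intro z. pose proof (huntington z z) as Hz.
    rewrite (join_comm (- z) z), hunt_join_bot in Hz. exact Hz. }
  rewrite <- (hunt_compl_invol (x + x)).
  pose proof (Hc (- x)) as Hx. rewrite !hunt_compl_invol in Hx.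
  rewrite Hx, hunt_compl_invol. reflexivity.
Qed.
End Huntington.

Lemma idx3_eq_dec (k l : idx3) : k = l \/ k <> l.
Proof. destruct k, l; (left; reflexivity) || (right; discriminate). Qed.

Lemma third_neq_l k l : k <> l -> third k l <> k.
Proof. destruct k, l; simpl; congruence. Qed.

Lemma third_neq_r k l : k <> l -> third k l <> l.
Proof. destruct k, l; simpl; congruence. Qed.

Lemma third_comm k l : third k l = third l k.
Proof. destruct k, l; reflexivity. Qed.

Lemma third_eq k l m : k <> l -> m <> k -> m <> l -> third k l = m.
Proof. destruct k, l, m; simpl; congruence. Qed.

Lemma idx3_cases k l i : k <> l -> i = k \/ i = l \/ i = third k l.
Proof. destruct k, l, i; simpl; intuition congruence. Qed.

Section ComplexAlgebra.
Variable A : RAsig.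

Lemma Bpt_eq (u v : Bpt A) : (forall i, proj1_sig u i = proj1_sig v i) -> u = v.
Proof.
  destruct u as [u Hu], v as [v Hv]; simpl. intro Euv.
  assert (u = v) as <- by (apply functional_extensionality; exact Euv).
  f_equal. apply proof_irrelevance.
Qed.

Lemma Ekl_refl k (s : Bpt A) : Ekl k k s.
Proof. destruct k; exact I. Qed.

Lemma Ekl_neq k l : k <> l ->
  @Ekl A k l = fun s => ra_le A (proj1_sig s (third k l)) (ra_id A).
Proof. destruct k, l; intro Hkl; reflexivity || contradiction (Hkl eq_refl). Qed.

Lemma cm_ext (X Y : CmSet A) : (forall s, X s <-> Y s) -> X = Y.
Proof. intro H. apply functional_extensionality. intro s. apply propositional_extensionality, H. Qed.

Lemma cm_join_of_incl (X Y : CmSet A) : (forall s, X s -> Y s) -> cm_join X Y = Y.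
Proof. intro H. apply cm_ext. unfold cm_join. firstorder. Qed.

Lemma cm_boolean :
  is_boolean_algebra (@cm_join A) (@cm_meet A) (@cm_compl A) (@cm_zero A) (@cm_one A).
Proof.
  repeat split; intros; apply cm_ext; intro s;
    unfold cm_join, cm_meet, cm_compl, cm_one, cm_zero; tauto.
Qed.

Lemma cm_cyl_zero k : cm_cyl k (@cm_zero A) = @cm_zero A.
Proof. apply cm_ext. unfold cm_cyl, cm_zero. firstorder. Qed.

Lemma cm_cyl_extensive k (X : CmSet A) : cm_join X (cm_cyl k X) = cm_cyl k X.
Proof. apply cm_join_of_incl. intros s Xs. exists s. split; [exact Xs | reflexivity]. Qed.

Lemma cm_cyl_meet k (X Y : CmSet A) :
  cm_cyl k (cm_meet X (cm_cyl k Y)) = cm_meet (cm_cyl k X) (cm_cyl k Y).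
Proof.
  apply cm_ext. intro s. unfold cm_cyl, cm_meet, Tk. split.
  - intros [x [[Xx [y [Yy Exy]]] Esx]]. split; [exists x | exists y]; split; congruence.
  - intros [[x [Xx Esx]] [y [Yy Esy]]]. exists x. split; [split; [exact Xx|] | exact Esx].
    exists y. split; congruence.
Qed.

Lemma cm_diag_refl k : @cm_diag A k k = @cm_one A.
Proof. destruct k; reflexivity. Qed.
End ComplexAlgebra.

Section WeaklyAssociative.
Variable A : RAsig.
Local Notation "x + y" := (ra_plus A x y).
Local Notation "- x" := (ra_compl A x).
Local Notation "x ; y" := (ra_comp A x y) (at level 40, left associativity).
Local Notation "x ^~" := (ra_conv A x) (at level 2).
Local Notation "1'" := (ra_id A).
Local Notation le := (ra_le A).
Local Notation meet := (ra_meet A).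
Local Notation bot := (ra_bot A).
Local Notation top := (ra_top A).
Local Notation atom := (is_atom A).

Hypothesis join_comm : forall x y : A, x + y = y + x.
Hypothesis join_assoc : forall x y z : A, x + (y + z) = (x + y) + z.
Hypothesis huntington : forall x y : A, - (- x + - y) + - (- x + y) = x.

Lemma compl_invol x : - - x = x.
Proof. exact (hunt_compl_invol join_comm join_assoc huntington x). Qed.

Lemma top_join_compl x : top = x + - x.
Proof. exact (hunt_excluded_middle join_comm join_assoc huntington 1' x). Qed.

Lemma join_bot x : x + bot = x.
Proof. exact (hunt_join_bot join_comm join_assoc huntington x 1'). Qed.

Lemma join_idem x : x + x = x.
Proof. exact (hunt_join_idem join_comm join_assoc huntington x). Qed.

Lemma ra_le_refl x : le x x.
Proof. apply join_idem. Qed.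

Lemma ra_le_trans x y z : le x y -> le y z -> le x z.
Proof. unfold ra_le. intros Hxy Hyz. rewrite <- Hyz, join_assoc, Hxy. reflexivity. Qed.

Lemma ra_le_antisym x y : le x y -> le y x -> x = y.
Proof. unfold ra_le. intros Hxy Hyx. rewrite <- Hxy, join_comm, Hyx. reflexivity. Qed.

Lemma bot_le x : le bot x.
Proof. unfold ra_le. rewrite join_comm. apply join_bot. Qed.

Lemma le_bot x : le x bot -> x = bot.
Proof. intro H. apply ra_le_antisym; [exact H | apply bot_le]. Qed.

Lemma le_top x : le x top.
Proof. unfold ra_le. rewrite (top_join_compl x), join_assoc, join_idem. reflexivity. Qed.

Lemma le_join_l x y : le x (x + y).
Proof. unfold ra_le. rewrite join_assoc, join_idem. reflexivity. Qed.

Lemma join_lub x y z : le x z -> le y z -> le (x + y) z.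
Proof. unfold ra_le. intros Hx Hy. rewrite <- join_assoc, Hy, Hx. reflexivity. Qed.

Lemma compl_le x y : le x y -> le (- y) (- x).
Proof.
  unfold ra_le. intro Hxy.
  pose proof (huntington (- x) (- y)) as Hx. rewrite !compl_invol, Hxy in Hx.
  rewrite <- Hx, join_assoc, join_idem. reflexivity.
Qed.

Lemma meet_le_l x y : le (meet x y) x.
Proof. rewrite <- (compl_invol x) at 2. apply compl_le, le_join_l. Qed.

Lemma meet_le_r x y : le (meet x y) y.
Proof. unfold ra_meet. rewrite join_comm. apply meet_le_l. Qed.

Lemma meet_glb a x y : le a x -> le a y -> le a (meet x y).
Proof.
  intros Hx Hy. rewrite <- (compl_invol a).
  apply compl_le, join_lub; apply compl_le; assumption.
Qed.

Lemma meet_compl x : meet x (- x) = bot.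
Proof. unfold ra_meet, ra_bot. rewrite compl_invol, join_comm, <- top_join_compl. reflexivity. Qed.

Lemma le_compl_of_disjoint a x : meet a x = bot -> le a (- x).
Proof.
  intro Hax. pose proof (huntington a x) as Ha. unfold ra_meet in Hax.
  rewrite Hax, join_comm, join_bot in Ha. rewrite <- Ha.
  apply compl_le. rewrite join_comm. apply le_join_l.
Qed.

Lemma le_compl_bot x : le x (- x) -> x = bot.
Proof. intro H. apply le_bot. rewrite <- (meet_compl x). apply meet_glb; [apply ra_le_refl | exact H]. Qed.

Lemma meet_neq_bot_le r z p q : meet r z <> bot -> le z p -> le z q -> meet p q <> bot.
Proof.
  intros Hrz Hp Hq Hpq. apply Hrz, le_bot.
  rewrite <- Hpq. apply (ra_le_trans (meet_le_r r z)), meet_glb; assumption.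
Qed.

Lemma atom_neq_bot a : atom a -> a <> bot.
Proof. intros [H _]. exact H. Qed.

Lemma atom_le_or_disjoint a x : atom a -> le a x \/ meet a x = bot.
Proof.
  intros [_ Ha]. destruct (Ha (meet a x) (meet_le_l a x)) as [E | E]; [right; exact E | left].
  rewrite <- E. apply meet_le_r.
Qed.

Lemma atom_le_eq a b : atom a -> atom b -> le a b -> a = b.
Proof.
  intros Ha [_ Hb] Hab. destruct (Hb a Hab) as [E | E]; [|exact E].
  exfalso. exact (atom_neq_bot Ha E).
Qed.

Lemma atom_eq_of_meet a b : atom a -> atom b -> meet a b <> bot -> a = b.
Proof.
  intros Ha Hb Hab. destruct (atom_le_or_disjoint b Ha) as [H | H];
    [exact (atom_le_eq Ha Hb H) | contradiction].
Qed.

Hypothesis comp_join_distr : forall x y z : A, (x + y) ; z = x ; z + y ; z.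
Hypothesis comp_id : forall x : A, x ; 1' = x.
Hypothesis conv_invol : forall x : A, x^~^~ = x.
Hypothesis conv_join : forall x y : A, (x + y)^~ = x^~ + y^~.
Hypothesis conv_comp : forall x y : A, (x ; y)^~ = y^~ ; x^~.
Hypothesis tarski : forall x y : A, x^~ ; (- (x ; y)) + - y = - y.

Lemma conv_mono x y : le x y -> le (x^~) (y^~).
Proof. unfold ra_le. intro H. rewrite <- conv_join, H. reflexivity. Qed.

Lemma comp_join_distr_l x y z : z ; (x + y) = z ; x + z ; y.
Proof.
  rewrite <- (conv_invol (z ; (x + y))), conv_comp, conv_join, comp_join_distr,
    conv_join, !conv_comp, !conv_invol.
  reflexivity.
Qed.

Lemma comp_mono x y u v : le x y -> le u v -> le (x ; u) (y ; v).
Proof.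
  unfold ra_le. intros Hxy Huv. apply (ra_le_trans (y := y ; u)); unfold ra_le.
  - rewrite <- comp_join_distr, Hxy. reflexivity.
  - rewrite <- comp_join_distr_l, Huv. reflexivity.
Qed.

Lemma comp_mono_r x y z : le x y -> le (z ; x) (z ; y).
Proof. intro H. apply comp_mono; [apply ra_le_refl | exact H]. Qed.

Lemma conv_id : 1'^~ = 1'.
Proof.
  rewrite <- (comp_id (1'^~)) at 1.
  rewrite <- (conv_invol 1') at 2. rewrite <- conv_comp, comp_id, conv_invol. reflexivity.
Qed.

Lemma id_comp x : 1' ; x = x.
Proof. rewrite <- (conv_invol (1' ; x)), conv_comp, conv_id, comp_id, conv_invol. reflexivity. Qed.

Lemma comp_id_le_l e x : le e 1' -> le (e ; x) x.
Proof. intro He. rewrite <- (id_comp x) at 2. apply comp_mono; [exact He | apply ra_le_refl]. Qed.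

Lemma comp_id_le_r e x : le e 1' -> le (x ; e) x.
Proof. intro He. rewrite <- (comp_id x) at 2. apply comp_mono_r, He. Qed.

Lemma conv_le_id e : le e 1' -> le (e^~) 1'.
Proof. intro He. rewrite <- conv_id. apply conv_mono, He. Qed.

Lemma atom_conv a : atom a -> atom (a^~).
Proof.
  assert (conv_bot : bot^~ = bot).
  { apply le_bot. rewrite <- (conv_invol bot) at 2. apply conv_mono, bot_le. }
  intros [Ha0 Ha]. split.
  - intro E. apply Ha0. rewrite <- (conv_invol a), E. exact conv_bot.
  - intros x Hx. apply conv_mono in Hx. rewrite conv_invol in Hx.
    destruct (Ha _ Hx) as [E | E]; [left | right];
      rewrite <- (conv_invol x), E; [exact conv_bot | reflexivity].
Qed.

Lemma cycle_law c x y : atom c -> le c (x ; y) -> meet y (x^~ ; c) <> bot.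
Proof.
  intros Hc Hcxy Hdisj. apply (atom_neq_bot Hc), le_compl_bot.
  apply (ra_le_trans Hcxy), (ra_le_trans (comp_mono_r x (le_compl_of_disjoint Hdisj))).
  pose proof (tarski (x^~) c) as Ht. rewrite conv_invol in Ht. exact Ht.
Qed.

Lemma cycle_atom a b c : atom b -> atom c -> le c (a ; b) -> le b (a^~ ; c).
Proof.
  intros Hb Hc H. destruct (atom_le_or_disjoint (a^~ ; c) Hb) as [Hle | Hdisj];
    [exact Hle | contradiction (cycle_law Hc H)].
Qed.

Lemma cycle_atom_r a b c : atom a -> atom c -> le c (a ; b) -> le a (c ; b^~).
Proof.
  intros Ha Hc H. apply conv_mono in H. rewrite conv_comp in H.
  apply cycle_atom in H; [|apply atom_conv; assumption ..].
  apply conv_mono in H. rewrite conv_comp, !conv_invol in H. exact H.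
Qed.

Definition is_id_atom (e : A) : Prop := atom e /\ le e 1'.

Lemma conv_id_atom e : is_id_atom e -> e^~ = e.
Proof.
  intros [He He1].
  assert (Hcyc : meet 1' (e^~ ; e) <> bot).
  { apply (cycle_law He). rewrite comp_id. apply ra_le_refl. }
  apply (atom_eq_of_meet (atom_conv He) He), (meet_neq_bot_le Hcyc).
  - apply comp_id_le_r, He1.
  - apply comp_id_le_l, conv_le_id, He1.
Qed.

Lemma id_atom_eq_of_le_top e f : is_id_atom e -> is_id_atom f -> le f (e ; top) -> f = e.
Proof.
  intros He Hf Hfe. pose proof (cycle_law (proj1 Hf) Hfe) as Hcyc.
  rewrite (conv_id_atom He) in Hcyc.
  apply (atom_eq_of_meet (proj1 Hf) (proj1 He)), (meet_neq_bot_le Hcyc).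
  - apply comp_id_le_l, He.
  - apply comp_id_le_r, Hf.
Qed.

Hypothesis weak_assoc : forall x : A, ((meet x 1') ; top) ; top = (meet x 1') ; top.

Lemma weak_assoc_id e : le e 1' -> (e ; top) ; top = e ; top.
Proof.
  intro He. replace e with (meet e 1') by
    (apply ra_le_antisym; [apply meet_le_l | apply meet_glb; [apply ra_le_refl | exact He]]).
  apply weak_assoc.
Qed.

Hypothesis atomic : is_atomic A.

Definition is_dom (e a : A) : Prop := is_id_atom e /\ le a (e ; a).

Lemma dom_exists a : atom a -> exists e, is_dom e a.
Proof.
  intro Ha. assert (Hcyc : meet 1' (a ; a^~) <> bot).
  { rewrite <- (conv_invol a) at 1. apply (cycle_law (atom_conv Ha)).
    rewrite comp_id. apply ra_le_refl. }
  destruct (atomic Hcyc) as [e [He Hle]]. exists e. split.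
  - split; [exact He | exact (ra_le_trans Hle (meet_le_l _ _))].
  - pose proof (cycle_atom_r Ha He (ra_le_trans Hle (meet_le_r _ _))) as Hae.
    rewrite conv_invol in Hae. exact Hae.
Qed.

(* Junk values: [dom a] and [ran a] are only specified for atoms [a]. *)
Definition dom (a : A) : A := epsilon (inhabits 1') (fun e => is_dom e a).
Definition ran (a : A) : A := dom (a^~).

Lemma dom_spec a : atom a -> is_dom (dom a) a.
Proof. intro Ha. exact (epsilon_spec _ _ (dom_exists Ha)). Qed.

Lemma ran_spec a : atom a -> is_id_atom (ran a) /\ le a (a ; ran a).
Proof.
  intro Ha. destruct (dom_spec (atom_conv Ha)) as [He Hle]. split; [exact He|].
  apply conv_mono in Hle. rewrite conv_comp, conv_invol, (conv_id_atom He) in Hle.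
  exact Hle.
Qed.

Lemma dom_of_le_top c e : atom c -> is_id_atom e -> le c (e ; top) -> dom c = e.
Proof.
  intros Hc He Hce. destruct (dom_spec Hc) as [Hd Hcd].
  apply (id_atom_eq_of_le_top He Hd).
  apply (ra_le_trans (cycle_atom_r (proj1 Hd) Hc Hcd)).
  rewrite <- (weak_assoc_id (proj2 He)). apply comp_mono; [exact Hce | apply le_top].
Qed.

Lemma dom_comp a b c : atom a -> atom c -> le c (a ; b) -> dom c = dom a.
Proof.
  intros Ha Hc Habc. destruct (dom_spec Ha) as [Hd Had].
  apply (dom_of_le_top Hc Hd), (ra_le_trans Habc).
  rewrite <- (weak_assoc_id (proj2 Hd)).
  apply comp_mono; [|apply le_top].
  exact (ra_le_trans Had (comp_mono_r _ (le_top a))).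
Qed.

Lemma ran_comp a b c : atom b -> atom c -> le c (a ; b) -> ran c = ran b.
Proof.
  intros Hb Hc Habc. apply conv_mono in Habc. rewrite conv_comp in Habc.
  exact (dom_comp (atom_conv Hb) (atom_conv Hc) Habc).
Qed.

Lemma ran_dom_comp a b c : atom a -> atom b -> atom c -> le c (a ; b) -> ran a = dom b.
Proof.
  intros Ha Hb Hc Habc. symmetry.
  exact (dom_comp (atom_conv Ha) Hb (cycle_atom Hb Hc Habc)).
Qed.

Lemma dom_id e : is_id_atom e -> dom e = e.
Proof.
  intro He. destruct (dom_spec (proj1 He)) as [Hd Hed]. symmetry.
  exact (atom_le_eq (proj1 He) (proj1 Hd) (ra_le_trans Hed (comp_id_le_r _ (proj2 He)))).
Qed.

Lemma ran_id e : is_id_atom e -> ran e = e.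
Proof. intro He. unfold ran. rewrite (conv_id_atom He). exact (dom_id He). Qed.

Lemma id_atom_le_comp_self e : is_id_atom e -> le e (e ; e).
Proof. intro He. destruct (dom_spec (proj1 He)) as [_ Hed]. rewrite (dom_id He) in Hed. exact Hed. Qed.

Lemma triangle_vertices s : inB A s ->
  dom (s i1) = dom (s i2) /\ ran (s i2) = dom (s i0) /\ ran (s i0) = ran (s i1).
Proof.
  intros [Hat Hs]. split; [|split].
  - exact (dom_comp (Hat i2) (Hat i1) Hs).
  - exact (ran_dom_comp (Hat i2) (Hat i0) (Hat i1) Hs).
  - symmetry. exact (ran_comp (Hat i0) (Hat i1) Hs).
Qed.

(* The identity atom at the endpoint [i] of an atom [a] used as side [k]. *)
Definition vertex_id (k i : idx3) (a : A) : A :=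
  match k, i with
  | i0, i1 | i1, i0 | i2, i0 => dom a
  | _, _ => ran a
  end.

Lemma vertex_id_triangle s k k' i : inB A s -> i <> k -> i <> k' ->
  vertex_id k i (s k) = vertex_id k' i (s k').
Proof.
  intro Hs. destruct (triangle_vertices Hs) as [E0 [E1 E2]].
  destruct i, k, k'; simpl; congruence.
Qed.

Lemma vertex_id_id k i e : is_id_atom e -> vertex_id k i e = e.
Proof. intro He. destruct k, i; simpl; auto using dom_id, ran_id. Qed.

Definition triple (a b c : A) : idx3 -> A :=
  fun i => match i with i0 => a | i1 => b | i2 => c end.

Lemma triple_inB a b c : atom a -> atom b -> atom c -> le b (c ; a) -> inB A (triple a b c).
Proof. intros Ha Hb Hc Hbca. split; [intros []; assumption | exact Hbca]. Qed.

(* The triangle on the atom [a] whose two vertices other than [j] coincide. *)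
Definition collapsed (j : idx3) (a : A) : idx3 -> A :=
  match j with
  | i0 => triple (ran a) a a
  | i1 => triple a (ran a) (a^~)
  | i2 => triple a a (dom a)
  end.

Lemma collapsed_inB j a : atom a -> inB A (collapsed j a).
Proof.
  intro Ha. destruct (dom_spec Ha) as [[Hd _] Had], (ran_spec Ha) as [[Hr _] Har].
  destruct j; apply triple_inB; auto using atom_conv.
  exact (cycle_atom Hr Ha Har).
Qed.

Lemma collapsed_id j a : atom a -> le (collapsed j a j) 1'.
Proof.
  intro Ha. destruct (dom_spec Ha) as [[_ Hd] _], (ran_spec Ha) as [[_ Hr] _].
  destruct j; assumption.
Qed.

Lemma collapsed_extension k l b : k <> l -> atom b ->
  exists t : Bpt A, le (proj1_sig t k) 1' /\ proj1_sig t l = b.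
Proof.
  intros Hkl Hb.
  assert (Ha : exists a, atom a /\ collapsed k a l = b).
  { destruct k, l; try contradiction (Hkl eq_refl);
      first [ exists b; split; [exact Hb | reflexivity]
            | exists (b^~); split; [exact (atom_conv Hb) | apply conv_invol] ]. }
  destruct Ha as [a [Ha Hab]].
  exists (exist _ (collapsed k a) (collapsed_inB k Ha)).
  split; [exact (collapsed_id k Ha) | exact Hab].
Qed.

Lemma const_inB e : is_id_atom e -> inB A (fun _ => e).
Proof. intro He. split; [intros _; exact (proj1 He) | exact (id_atom_le_comp_self He)]. Qed.

Definition orient (m : idx3) (a : A) : A := match m with i1 => a^~ | _ => a end.

(* Both other sides of a triangle with an identity side [m] are the same
   edge, traversed in opposite directions exactly when m = i1. *)
Lemma collapsed_side s k l : inB A s -> k <> l -> le (s (third k l)) 1' ->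
  s l = orient (third k l) (s k).
Proof.
  intros [Hat Hs] Hkl Hid.
  assert (E0 : le (s i0) 1' -> s i1 = s i2)
    by (intro H; exact (atom_le_eq (Hat i1) (Hat i2) (ra_le_trans Hs (comp_id_le_r _ H)))).
  assert (E1 : le (s i1) 1' -> s i0 = (s i2)^~).
  { intro H. apply (atom_le_eq (Hat i0) (atom_conv (Hat i2))).
    exact (ra_le_trans (cycle_atom (Hat i0) (Hat i1) Hs) (comp_id_le_r _ H)). }
  assert (E2 : le (s i2) 1' -> s i1 = s i0)
    by (intro H; exact (atom_le_eq (Hat i1) (Hat i0) (ra_le_trans Hs (comp_id_le_l _ H)))).
  destruct k, l; simpl in Hid |- *; try contradiction (Hkl eq_refl).
  - exact (E2 Hid).
  - rewrite (E1 Hid), conv_invol. reflexivity.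
  - symmetry. exact (E2 Hid).
  - symmetry. exact (E0 Hid).
  - exact (E1 Hid).
  - exact (E0 Hid).
Qed.

Lemma orient_le_id m e : le e 1' -> le (orient m e) 1'.
Proof. intro He. destruct m; simpl; auto using conv_le_id. Qed.
Lemma collapsed_cyl_commute k l (s z x : Bpt A) : k <> l ->
  le (proj1_sig s k) 1' -> proj1_sig s l = proj1_sig z l -> proj1_sig z k = proj1_sig x k ->
  exists w : Bpt A, proj1_sig s k = proj1_sig w k /\ proj1_sig w l = proj1_sig x l.
Proof.
  intros Hkl Hsk Esz Ezx.
  pose proof (third_neq_l Hkl) as Hmk. pose proof (third_neq_r Hkl) as Hml.
  destruct s as [s Bs], z as [z Bz], x as [x Bx]; simpl in *.
  destruct (collapsed_extension Hkl (proj1 Bx l)) as [[w Bw] [Hwk Ewx]]; simpl in *.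
  exists (exist _ w Bw). split; [|exact Ewx]. simpl.
  (* all four triangles share the vertex [third k l] *)
  rewrite <- (vertex_id_id k (third k l) (conj (proj1 Bs k) Hsk)),
    <- (vertex_id_id k (third k l) (conj (proj1 Bw k) Hwk)),
    (vertex_id_triangle Bs Hmk Hml), Esz, <- (vertex_id_triangle Bz Hmk Hml), Ezx,
    (vertex_id_triangle Bx Hmk Hml), <- Ewx, (vertex_id_triangle Bw Hmk Hml).
  reflexivity.
Qed.

Lemma collapsed_eq k l (u v : Bpt A) : k <> l ->
  le (proj1_sig u (third k l)) 1' -> le (proj1_sig v (third k l)) 1' ->
  proj1_sig u k = proj1_sig v k -> u = v.
Proof.
  intros Hkl Hu Hv Euv. apply Bpt_eq.
  destruct u as [u Bu], v as [v Bv]; simpl in *.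
  intro i. destruct (idx3_cases i Hkl) as [-> | [-> | ->]].
  - exact Euv.
  - rewrite (collapsed_side Bu Hkl Hu), (collapsed_side Bv Hkl Hv), Euv. reflexivity.
  - pose proof (not_eq_sym (third_neq_r Hkl)) as Hlm.
    rewrite <- (vertex_id_id (third k l) l (conj (proj1 Bu _) Hu)),
      <- (vertex_id_id (third k l) l (conj (proj1 Bv _) Hv)),
      (vertex_id_triangle Bu Hlm (not_eq_sym Hkl)), (vertex_id_triangle Bv Hlm (not_eq_sym Hkl)),
      Euv.
    reflexivity.
Qed.

Lemma cm_cyl_commute k l m (X : CmSet A) : m <> k -> m <> l ->
  cm_join (cm_meet (cm_cyl l (cm_cyl k X)) (@cm_diag A l m)) (cm_cyl k (cm_cyl l X))
  = cm_cyl k (cm_cyl l X).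
Proof.
  intros Hmk Hml. apply cm_join_of_incl.
  intros s [[z [[x [Xx Ezx]] Esz]] Hd]. unfold Tk in *.
  destruct (idx3_eq_dec k l) as [<- | Hkl].
  - exists x. split; [exists x; split; [exact Xx | reflexivity] | congruence].
  - unfold cm_diag in Hd. rewrite (Ekl_neq A (not_eq_sym Hml)),
      (third_eq (not_eq_sym Hml) Hkl (not_eq_sym Hmk)) in Hd.
    destruct (collapsed_cyl_commute Hkl Hd Esz Ezx) as [w [Esw Ewx]].
    exists w. split; [exists x; split; [exact Xx | exact Ewx] | exact Esw].
Qed.

Lemma cm_diag_cyl k l m : l <> k -> l <> m ->
  @cm_diag A k m = cm_cyl l (cm_meet (@cm_diag A k l) (@cm_diag A l m)).
Proof.
  intros Hlk Hlm. apply cm_ext. intro s. unfold cm_diag, cm_cyl, cm_meet, Tk.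
  rewrite (Ekl_neq A (not_eq_sym Hlk)), (Ekl_neq A Hlm).
  destruct (idx3_eq_dec k m) as [<- | Hkm].
  - rewrite (third_comm l k). split; [intros _ | intros _; apply Ekl_refl].
    destruct (collapsed_extension (third_neq_r (not_eq_sym Hlk))
                (proj1 (proj2_sig s) l)) as [t [Ht Ets]].
    exists t. split; [split; exact Ht | symmetry; exact Ets].
  - rewrite (Ekl_neq A Hkm), (third_eq Hkm Hlk Hlm),
      (third_eq (not_eq_sym Hlk) (not_eq_sym Hkm) (not_eq_sym Hlm)),
      (third_eq Hlm (not_eq_sym Hlk) Hkm).
    split.
    + intro Hsl. exists (exist _ (fun _ => proj1_sig s l)
                          (const_inB (conj (proj1 (proj2_sig s) l) Hsl))).
      simpl. auto.
    + intros [[t Bt] [[Htm Htk] Est]]. simpl in *. rewrite Est.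
      rewrite <- (third_eq (not_eq_sym Hlk) (not_eq_sym Hkm) (not_eq_sym Hlm)) in Htm.
      rewrite (collapsed_side Bt (not_eq_sym Hlk) Htm). apply orient_le_id, Htk.
Qed.

Lemma cm_cyl_diag_disjoint k l (X : CmSet A) : k <> l ->
  cm_meet (cm_cyl k (cm_meet (@cm_diag A k l) X))
          (cm_cyl k (cm_meet (@cm_diag A k l) (cm_compl X))) = @cm_zero A.
Proof.
  intro Hkl. apply cm_ext. intro s.
  unfold cm_meet, cm_cyl, cm_diag, cm_compl, cm_zero, Tk. rewrite (Ekl_neq A Hkl).
  split; [|intros []].
  intros [[u [[Hu Xu] Esu]] [v [[Hv Xv] Esv]]].
  apply Xv. rewrite <- (collapsed_eq Hkl Hu Hv (eq_trans (eq_sym Esu) Esv)). exact Xu.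
Qed.
End WeaklyAssociative.

Theorem lemma5 (A : RAsig) :
  is_WA A -> is_atomic A ->
  is_NA3 (@cm_join A) (@cm_meet A) (@cm_compl A) (@cm_zero A) (@cm_one A)
         (@cm_cyl A) (@cm_diag A).
Proof.
  intros (join_comm & join_assoc & huntington & weak_assoc & comp_join_distr & comp_id &
          conv_invol & conv_join & conv_comp & tarski) atomic.
  split; [exact (cm_boolean A) |].
  split; [exact (cm_cyl_zero A) |].
  split; [exact (@cm_cyl_extensive A) |].
  split; [exact (@cm_cyl_meet A) |].
  split; [intros k l m X Hmk Hml; apply cm_cyl_commute; assumption |].
  split; [exact (@cm_diag_refl A) |].
  split; [intros k l m Hlk Hlm; apply cm_diag_cyl; assumption |].
  intros k l X Hkl. apply cm_cyl_diag_disjoint; assumption.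
Qed.
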